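(* Consider a run of Algorithm 1 (described in the context) against an adversary making at most $C$ corruptions. The total absolute loss $\sum |f(x_t)-q_t|$ over all rounds $t$ lying in corrupted intervals is at most $L\cdot O(C\log T)$, with an absolute constant.
   Context: Problem. Fix $L>0$ and $T\ge 2$. An adversary fixes an unknown $L$-Lipschitz $f:[0,1]\to[0,L]$. In each round $t=1,\dots,T$: the adversary chooses $x_t\in[0,1]$; the learner observes $x_t$ and guesses $q_t$; the adversary observes $q_t$ and sends $\sigma_t\in\{0,1\}$, equal to $\sigma(q_t-f(x_t))$ in uncorrupted rounds and $1-\sigma(q_t-f(x_t))$ in corrupted rounds, where $\sigma(u)=1$ if $u>0$ and $0$ if $u\le 0$; the adversary chooses adaptively which rounds to corrupt, at most $C$ in total ($C$ unknown to the learner). The absolute loss of round $t$ is $|f(x_t)-q_t|$. $\mathtt{len}(I)$ is the length of an interval $I$. $\mathtt{MidpointQuery}(I,Y)$, $Y=[a,b]$: guess $q=(a+b)/2$; if $\sigma_t=1$ return $Y\cap[0,q+L\,\mathtt{len}(I)]$, if $\sigma_t=0$ return $Y\cap[q-L\,\mathtt{len}(I),L]$. Algorithm 1. Maintain a partition of $[0,1]$ into intervals; each $I_j$ carries a checking interval $S_j$, range $Y_j$, and a ''dubious'' flag (initially unset). Initially: $8$ intervals of length $1/8$ (the root intervals), each with $S_j=Y_j=[0,L]$. In round $t$, with $I_j$ the partition interval containing $x_t$: (i) if some endpoint of $S_j$ has not been guessed in a round whose context lay in $I_j$, guess such an endpoint; if the guess was $\min(S_j)$ with $\sigma_t=1$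 or $\max(S_j)$ with $\sigma_t=0$, mark $I_j$ dubious; once both endpoints have been queried, set $Y_j=[0,L]$ if dubious and otherwise $Y_j=[\min(S_j)-L\,\mathtt{len}(I_j),\max(S_j)+L\,\mathtt{len}(I_j)]\cap[0,L]$. (ii) Otherwise set $Y_j:=\mathtt{MidpointQuery}(I_j,Y_j)$; if then $\mathtt{len}(Y_j)<\max(4L\,\mathtt{len}(I_j),4L/T)$, bisect $I_j$ into its two halves (its children), which replace it, each with checking interval equal to the current $Y_j$ (endpoints unqueried, not dubious). Interval types. Say a round $t$ lies in $I_j$ if $I_j$ is the partition interval containing $x_t$ at round $t$. An interval $I_j$ is corrupted if some round lying in $I_j$ has a corrupted signal. *)

From Stdlib Require Import Reals Lra List Arith Bool.
Open Scope bool_scope.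
Open Scope R_scope.

(* A node (d,k) denotes the dyadic interval [k/2^d, (k+1)/2^d] of length 1/2^d.
   The partition intervals of Algorithm 1 are always such nodes (roots: depth 3). *)

(* index of the depth-d dyadic interval containing x (left-closed, right-open
   convention; x = 1 goes to the rightmost interval). *)
Fixpoint addr (x : R) (d : nat) : nat :=
  match d with
  | O => O
  | S d' => let k := addr x d' in
            if Rlt_dec x ((2 * INR k + 1) / 2 ^ (S d')) then (2 * k)%nat
            else (2 * k + 1)%nat
  end.

Definition len_node (d : nat) : R := / 2 ^ d.

Record state := mkState {
  spl  : nat -> nat -> bool;
  Slo  : nat -> nat -> R;      (* checking interval S = [Slo, Shi] *)
  Shi  : nat -> nat -> R;
  Ylo  : nat -> nat -> R;      (* range Y = [Ylo, Yhi] *)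
  Yhi  : nat -> nat -> R;
  qmin : nat -> nat -> bool;   (* min S already guessed in this interval *)
  qmax : nat -> nat -> bool;   (* max S already guessed in this interval *)
  dub  : nat -> nat -> bool
}.

Definition upd {A : Type} (g : nat -> nat -> A) (d k : nat) (v : A) :
  nat -> nat -> A :=
  fun d' k' => if Nat.eqb d' d && Nat.eqb k' k then v else g d' k'.

Definition init_state (L : R) : state :=
  mkState (fun _ _ => false) (fun _ _ => 0) (fun _ _ => L)
          (fun _ _ => 0) (fun _ _ => L)
          (fun _ _ => false) (fun _ _ => false) (fun _ _ => false).

(* depth of the partition interval containing x: descend from the root
   intervals (depth 3) through bisected nodes.  The fuel T suffices since at
   most one bisection happens per round. *)
Fixpoint leaf_depth (st : state) (x : R) (fuel d : nat) : nat :=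
  match fuel with
  | O => d
  | S n => if spl st d (addr x d) then leaf_depth st x n (S d) else d
  end.

Definition sigma (u : R) : bool := if Rlt_dec 0 u then true else false.

Definition signal (f : R -> R) (x q : R) (corrupt : bool) : bool :=
  xorb (sigma (q - f x)) corrupt.

(* One round of Algorithm 1. Returns new state, the guess q_t, and the node
   (partition interval) in which the round lies. *)
Definition step (L : R) (T : nat) (f : R -> R) (st : state) (x : R)
  (corrupt : bool) : state * R * (nat * nat) :=
  let d := leaf_depth st x T 3 in
  let k := addr x d in
  let len := len_node d in
  let a := Slo st d k in
  let b := Shi st d k in
  if negb (qmin st d k && qmax st d k) then
    (* (i) checking step; min endpoint is guessed first *)
    let q := if qmin st d k then b else a in
    let s := signal f x q corrupt in
    let qmin' := true in
    let qmax' := qmin st d k in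
    let dub' := dub st d k || (if qmin st d k then negb s else s) in
    let ylo := if qmax' then (if dub' then 0 else Rmax (a - L * len) 0)
               else Ylo st d k in
    let yhi := if qmax' then (if dub' then L else Rmin (b + L * len) L)
               else Yhi st d k in
    (mkState (spl st) (Slo st) (Shi st)
       (upd (Ylo st) d k ylo) (upd (Yhi st) d k yhi)
       (upd (qmin st) d k qmin') (upd (qmax st) d k qmax')
       (upd (dub st) d k dub'), q, (d, k))
  else
    let ya := Ylo st d k in
    let yb := Yhi st d k in
    let q := (ya + yb) / 2 in
    let s := signal f x q corrupt in
    let ylo := if s then Rmax ya 0 else Rmax ya (q - L * len) in
    let yhi := if s then Rmin yb (q + L * len) else Rmin yb L in
    if Rlt_dec (yhi - ylo) (Rmax (4 * L * len) (4 * L / INR T)) then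
      let c1 := (2 * k)%nat in
      let c2 := (2 * k + 1)%nat in
      let d1 := S d in
      let up2 {A : Type} (g : nat -> nat -> A) (v : A) :=
        upd (upd g d1 c1 v) d1 c2 v in
      (mkState (upd (spl st) d k true)
         (up2 (Slo st) ylo) (up2 (Shi st) yhi)
         (up2 (upd (Ylo st) d k ylo) ylo) (up2 (upd (Yhi st) d k yhi) yhi)
         (up2 (qmin st) false) (up2 (qmax st) false) (up2 (dub st) false),
       q, (d, k))
    else
      (mkState (spl st) (Slo st) (Shi st)
         (upd (Ylo st) d k ylo) (upd (Yhi st) d k yhi)
         (qmin st) (qmax st) (dub st), q, (d, k)).

(* state before round t (rounds indexed 0..T-1); x t = context of round t,
   c t = whether round t is corrupted. *)
Fixpoint run (L : R) (T : nat) (f : R -> R) (x : nat -> R) (c : nat -> bool)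
  (t : nat) : state :=
  match t with
  | O => init_state L
  | S t' => fst (fst (step L T f (run L T f x c t') (x t') (c t')))
  end.

Definition guess L T f x c t : R := snd (fst (step L T f (run L T f x c t) (x t) (c t))).
Definition node_of L T f x c t : nat * nat := snd (step L T f (run L T f x c t) (x t) (c t)).

Definition node_eqb (n m : nat * nat) : bool :=
  Nat.eqb (fst n) (fst m) && Nat.eqb (snd n) (snd m).

Definition corrupted_node L T f x c (n : nat * nat) : bool :=
  existsb (fun t => node_eqb (node_of L T f x c t) n && c t) (seq 0 T).

Definition loss_in_corrupted L T f x c : R :=
  fold_right Rplus 0
    (map (fun t => Rabs (f (x t) - guess L T f x c t))
       (filter (fun t => corrupted_node L T f x c (node_of L T f x c t)) (seq 0 T))).

From Stdlib Require Import Reals List Arith Lia Lra Bool FunctionalExtensionality.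
Open Scope R_scope.

(* Every round in a corrupted interval loses at most L, because both f(x_t) and
   the guess lie in [0, L], and every corrupted interval contains one of the at
   most C corrupted rounds; so it suffices that each interval hosts O(log T)
   rounds, whatever the signals.  An interval sees two checking rounds and then
   midpoint queries.  A midpoint query that does not bisect the interval I
   returns a range of width w' <= w/2 + L len(I) with 4 L len(I) <= w' and
   4L/T <= w', hence w' <= 2/3 w; starting from w <= L, at most log_{3/2} T such
   queries keep w' >= 4L/T, and the next query bisects I. *)

Lemma ln_le x y : 0 < x -> x <= y -> ln x <= ln y.
Proof.
  intros Hx [Hxy | ->]; [left; apply ln_increasing |]; lra.
Qed.

Lemma ln_nonneg x : 1 <= x -> 0 <= ln x.
Proof. intros Hx. rewrite <- ln_1. apply ln_le; lra. Qed.

Lemma ln_three_halves_pos : 0 < ln (3/2).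
Proof. rewrite <- ln_1. apply ln_increasing; lra. Qed.

Definition loss_const : R := 3 / ln 2 + / ln (3/2).

Lemma loss_const_pos : 0 < loss_const.
Proof.
  pose proof ln_three_halves_pos.
  assert (0 < / ln 2) by (apply Rinv_0_lt_compat; rewrite <- ln_1; apply ln_increasing; lra).
  assert (0 < / ln (3/2)) by (apply Rinv_0_lt_compat; lra).
  unfold loss_const, Rdiv. lra.
Qed.

Lemma div2_iff_child k k' : (k' / 2 = k)%nat <-> (k' = 2 * k \/ k' = 2 * k + 1)%nat.
Proof.
  split.
  - intros <-. pose proof (Nat.div_mod k' 2). pose proof (Nat.mod_upper_bound k' 2). lia.
  - intros [-> | ->]; rewrite <- Nat.div2_div; [apply Nat.div2_double | apply Nat.div2_odd'].
Qed.

Lemma addr_succ_div2 x d : (addr x (S d) / 2 = addr x d)%nat.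
Proof. apply div2_iff_child. simpl. destruct Rlt_dec; auto. Qed.

Lemma leaf_depth_spec st x fuel d0 :
  let r := leaf_depth st x fuel d0 in
  (d0 <= r <= d0 + fuel)%nat /\
  (r = d0 \/ spl st (r - 1) (addr x r / 2) = true) /\
  (spl st r (addr x r) = false \/ r = (d0 + fuel)%nat).
Proof.
  revert d0; induction fuel as [| fuel IH]; intros d0; cbn [leaf_depth].
  - repeat split; auto; lia.
  - destruct (spl st d0 (addr x d0)) eqn:Hspl; [| repeat split; auto; lia].
    destruct (IH (S d0)) as (Hr & Hpar & Hend).
    set (r := leaf_depth st x fuel (S d0)) in *.
    split; [lia | split; [right | destruct Hend; [left | right]; auto; lia]].
    destruct Hpar as [-> | Hpar]; [| exact Hpar].
    rewrite addr_succ_div2. replace (S d0 - 1)%nat with d0 by lia. exact Hspl.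
Qed.

Lemma upd_same {A} (g : nat -> nat -> A) d k v : upd g d k v d k = v.
Proof. unfold upd. now rewrite !Nat.eqb_refl. Qed.

Lemma upd_other {A} (g : nat -> nat -> A) d k v d' k' :
  (d', k') <> (d, k) -> upd g d k v d' k' = g d' k'.
Proof.
  intros Hne. unfold upd.
  destruct (Nat.eqb_spec d' d), (Nat.eqb_spec k' k); subst; auto. congruence.
Qed.

Definition upd_children {A} (g : nat -> nat -> A) d k (v : A) : nat -> nat -> A :=
  upd (upd g (S d) (2 * k) v) (S d) (2 * k + 1) v.

Lemma upd_children_child {A} (g : nat -> nat -> A) d k v k' :
  (k' / 2 = k)%nat -> upd_children g d k v (S d) k' = v.
Proof.
  unfold upd_children. intros [-> | ->]%div2_iff_child; [| apply upd_same].
  rewrite upd_other by (intros [=]; lia). apply upd_same.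
Qed.

Lemma upd_children_other {A} (g : nat -> nat -> A) d k v d' k' :
  ~ (d' = S d /\ k' / 2 = k)%nat -> upd_children g d k v d' k' = g d' k'.
Proof.
  intros Hnc. unfold upd_children.
  rewrite !upd_other; auto; intros [= -> ->]; apply Hnc; split; auto; apply div2_iff_child; auto.
Qed.

Lemma node_eq_dec (n m : nat * nat) : {n = m} + {n <> m}.
Proof. decide equality; apply Nat.eq_dec. Defined.

Lemma node_cases d k d' k' :
  (d', k') = (d, k) \/ (d' = S d /\ k' / 2 = k)%nat \/
  ((d', k') <> (d, k) /\ ~ (d' = S d /\ k' / 2 = k)%nat).
Proof.
  destruct (node_eq_dec (d', k') (d, k)) as [| Hne]; [left; auto | right].
  destruct (Nat.eq_dec d' (S d)), (Nat.eq_dec (k' / 2) k); [left; auto | right; split; [exact Hne | tauto] ..].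
Qed.

Lemma length_filter_orb {A} (p q : A -> bool) l :
  (length (filter (fun a => p a || q a) l) <= length (filter p l) + length (filter q l))%nat.
Proof. induction l as [| a l IH]; simpl; auto. destruct (p a), (q a); simpl; lia. Qed.

Lemma length_filter_existsb (A l : list nat) (h : nat -> nat -> bool) (p : nat -> bool) (b : R) :
  (forall s, In s A -> p s = true -> INR (length (filter (h s) l)) <= b) ->
  INR (length (filter (fun t => existsb (fun s => h s t && p s) A) l)) <=
  b * INR (length (filter p A)).
Proof.
  induction A as [| a A IH]; intros Hb; cbn [existsb filter].
  - rewrite filter_false. simpl. lra.
  - assert (IH' := IH (fun s Hs => Hb s (or_intror Hs))).
    destruct (p a) eqn:Hpa; cbn [length].
    + eapply Rle_trans; [apply le_INR, length_filter_orb |].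
      rewrite plus_INR, S_INR.
      assert (Ha := Hb a (or_introl eq_refl) Hpa).
      rewrite (filter_ext _ (h a)) by (intros; apply andb_true_r). lra.
    + rewrite (filter_ext _ (fun t => existsb (fun s => h s t && p s) A)) by
        (intros; rewrite andb_false_r; reflexivity). exact IH'.
Qed.

Lemma sum_le_length (l : list nat) (g : nat -> R) b :
  (forall s, In s l -> g s <= b) -> fold_right Rplus 0 (map g l) <= b * INR (length l).
Proof.
  induction l as [| a l IH]; intros Hb; cbn [map fold_right length]; [simpl; lra |].
  rewrite S_INR. assert (Ha := Hb a (or_introl eq_refl)).
  assert (IH' := IH (fun s Hs => Hb s (or_intror Hs))). lra.
Qed.

Definition bump (cnt : nat -> nat -> nat) (n : nat * nat) : nat -> nat -> nat :=
  fun d k => if node_eqb (d, k) n then S (cnt d k) else cnt d k.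

Lemma bump_same cnt d k : bump cnt (d, k) d k = S (cnt d k).
Proof. unfold bump, node_eqb. cbn. now rewrite !Nat.eqb_refl. Qed.

Lemma bump_other cnt d k d' k' : (d', k') <> (d, k) -> bump cnt (d, k) d' k' = cnt d' k'.
Proof.
  intros Hne. unfold bump, node_eqb. cbn.
  destruct (Nat.eqb_spec d' d), (Nat.eqb_spec k' k); subst; auto. congruence.
Qed.

Definition width (st : state) d k : R := Yhi st d k - Ylo st d k.

Definition in_range (L : R) (st : state) d k : Prop :=
  0 <= Slo st d k <= L /\ 0 <= Shi st d k <= L /\ 0 <= Ylo st d k <= L /\ 0 <= Yhi st d k <= L.

Definition agree (st st' : state) d k : Prop :=
  Slo st' d k = Slo st d k /\ Shi st' d k = Shi st d k /\
  Ylo st' d k = Ylo st d k /\ Yhi st' d k = Yhi st d k /\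
  qmin st' d k = qmin st d k /\ qmax st' d k = qmax st d k.

Section Algorithm.

Variables (L : R) (T : nat) (f : R -> R).
Hypotheses (HL : 0 < L) (HT : (2 <= T)%nat).

Definition budget : R := 3 + ln (INR T) / ln (3/2).

(* [qlo], [qhi] record whether min S, max S have been queried in the leaf, which
   has seen [n] rounds; [m] counts its midpoint queries, none of which bisected it. *)
Definition phase_ok (qlo qhi : bool) (w : R) (n : nat) : Prop :=
  match qlo, qhi with
  | false, false => n = 0%nat
  | true, false => n = 1%nat
  | true, true => exists m, n = (2 + m)%nat /\ w <= L * (2/3) ^ m /\
                            (m = 0%nat \/ 4 * L / INR T <= w)
  | false, true => False
  end.

Lemma INR_T_pos : 0 < INR T.
Proof. apply lt_0_INR. lia. Qed.

Lemma budget_ge_3 : 3 <= budget.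
Proof.
  unfold budget. pose proof ln_three_halves_pos.
  assert (0 <= ln (INR T)) by (apply ln_nonneg, (le_INR 1); lia).
  assert (0 <= ln (INR T) / ln (3/2))
    by (apply Rmult_le_pos; [| left; apply Rinv_0_lt_compat]; lra).
  lra.
Qed.

Lemma midpoint_rounds_log m w :
  w <= L * (2/3) ^ m -> 4 * L / INR T <= w -> INR m <= ln (INR T) / ln (3/2).
Proof.
  intros Hup Hlo. pose proof INR_T_pos. pose proof ln_three_halves_pos.
  assert (Hpow : (3/2) ^ m * (2/3) ^ m = 1)
    by (rewrite <- Rpow_mult_distr, <- (pow1 m); f_equal; field).
  assert (0 < (3/2) ^ m) by (apply pow_lt; lra).
  assert (H4L : 4 * L <= L * ((2/3) ^ m * INR T)).
  { replace (4 * L) with (4 * L / INR T * INR T) by (field; lra).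
    rewrite <- Rmult_assoc. apply Rmult_le_compat_r; lra. }
  assert (H4 : 4 <= (2/3) ^ m * INR T) by nra.
  assert (Hgrow : (3/2) ^ m <= INR T).
  { replace (INR T) with ((3/2) ^ m * ((2/3) ^ m * INR T)) by (rewrite <- Rmult_assoc, Hpow; ring).
    nra. }
  apply Rmult_le_reg_r with (ln (3/2)); [lra |].
  unfold Rdiv. rewrite Rmult_assoc, Rinv_l, Rmult_1_r by lra.
  rewrite <- ln_pow by lra. apply ln_le; lra.
Qed.

Lemma phase_ok_budget qlo qhi w n : phase_ok qlo qhi w n -> INR (S n) <= budget.
Proof.
  pose proof budget_ge_3.
  destruct qlo, qhi; cbn [phase_ok]; [| intros -> | intros [] | intros ->]; cbn; try lra.
  intros (m & -> & Hup & [-> | Hlo]); [cbn; lra |].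
  pose proof (midpoint_rounds_log m w Hup Hlo).
  rewrite !S_INR. unfold budget. lra.
Qed.

(* [w' <= w/2 + a] and [4 a <= w'] give [w' <= 2/3 w]. *)
Lemma phase_ok_midpoint w w' a n :
  phase_ok true true w n -> w' <= w / 2 + a -> 4 * a <= w' -> 4 * L / INR T <= w' ->
  phase_ok true true w' (S n).
Proof.
  intros (m & -> & Hup & _) Hw' Ha Hlo.
  exists (S m). split; [lia |]. split; [| right; exact Hlo].
  rewrite <- tech_pow_Rmult. lra.
Qed.

(* [cnt d k] counts the rounds that lay in interval (d, k).  Children of an
   unsplit interval have seen no round, so they are fresh when it is bisected;
   the depth bound lets [leaf_depth], with fuel T, always stop at a leaf. *)
Record Inv (st : state) (t : nat) (cnt : nat -> nat -> nat) : Prop := {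
  inv_range : forall d k, in_range L st d k;
  inv_split_depth : forall d k, spl st d k = true -> (d < 3 + t)%nat;
  inv_unvisited_children : forall d k k', (3 <= d)%nat -> spl st d k = false ->
    (k' / 2 = k)%nat -> cnt (S d) k' = 0%nat;
  inv_phase : forall d k, spl st d k = false ->
    phase_ok (qmin st d k) (qmax st d k) (width st d k) (cnt d k);
  inv_budget : forall d k, INR (cnt d k) <= budget }.

Lemma init_inv : Inv (init_state L) 0 (fun _ _ => 0%nat).
Proof.
  pose proof budget_ge_3.
  constructor; cbn; intros; try easy.
  - unfold in_range; cbn; lra.
  - lra.
Qed.

Lemma current_leaf st t cnt x :
  (t < T)%nat -> Inv st t cnt ->
  let d := leaf_depth st x T 3 in
  (3 <= d)%nat /\ (d = 3%nat \/ spl st (d - 1) (addr x d / 2) = true) /\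
  spl st d (addr x d) = false.
Proof.
  intros Ht Hinv d.
  destruct (leaf_depth_spec st x T 3) as (Hd & Hpar & [Hleaf | Hend]); fold d in Hd, Hpar |- *;
    repeat split; auto; try lia.
  destruct (spl st d (addr x d)) eqn:Hspl; auto.
  apply (inv_split_depth _ _ _ Hinv) in Hspl. fold d in Hend. lia.
Qed.

Section LeafUpdate.

Variables (st st' : state) (t : nat) (cnt : nat -> nat -> nat) (d k : nat).
Hypothesis Hinv : Inv st t cnt.
Hypothesis Hdepth : (3 <= d)%nat.
Hypothesis Hparent : d = 3%nat \/ spl st (d - 1) (k / 2) = true.
Hypothesis Hleaf : spl st d k = false.
Hypothesis Hspl_other : forall d' k', (d', k') <> (d, k) -> spl st' d' k' = spl st d' k'.
Hypothesis Hagree : forall d' k', (d', k') <> (d, k) ->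
  spl st' d k = false \/ ~ (d' = S d /\ k' / 2 = k)%nat -> agree st st' d' k'.
Hypothesis Hleaf_range : in_range L st' d k.
Hypothesis Hleaf_phase : spl st' d k = false ->
  phase_ok (qmin st' d k) (qmax st' d k) (width st' d k) (S (cnt d k)).
Hypothesis Hchildren : spl st' d k = true -> forall k', (k' / 2 = k)%nat ->
  in_range L st' (S d) k' /\ qmin st' (S d) k' = false /\ qmax st' (S d) k' = false.

Lemma agree_in_range d' k' : agree st st' d' k' -> in_range L st d' k' -> in_range L st' d' k'.
Proof. unfold in_range. intros (-> & -> & -> & -> & _). auto. Qed.

Lemma agree_phase_ok d' k' n : agree st st' d' k' ->
  phase_ok (qmin st d' k') (qmax st d' k') (width st d' k') n ->
  phase_ok (qmin st' d' k') (qmax st' d' k') (width st' d' k') n.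
Proof. unfold width. intros (_ & _ & -> & -> & -> & ->). auto. Qed.

Lemma leaf_update_range d' k' : in_range L st' d' k'.
Proof.
  destruct (node_cases d k d' k') as [[= -> ->] | [[-> Hk] | [Hne Hnc]]]; auto.
  - destruct (spl st' d k) eqn:Hs.
    + apply (Hchildren eq_refl _ Hk).
    + apply agree_in_range; [apply Hagree; [intros [=]; lia | auto] | apply Hinv].
  - apply agree_in_range; [apply Hagree; auto | apply Hinv].
Qed.

Lemma leaf_update_split_depth d' k' : spl st' d' k' = true -> (d' < 3 + S t)%nat.
Proof.
  destruct (node_eq_dec (d', k') (d, k)) as [[= -> ->] | Hne].
  - intros _. destruct Hparent as [-> | Hp]; [lia |].
    apply (inv_split_depth _ _ _ Hinv) in Hp. lia.
  - rewrite Hspl_other by exact Hne. intros Hs.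
    apply (inv_split_depth _ _ _ Hinv) in Hs. lia.
Qed.

Lemma leaf_update_unvisited_children d' k' k'' : (3 <= d')%nat -> spl st' d' k' = false ->
  (k'' / 2 = k')%nat -> bump cnt (d, k) (S d') k'' = 0%nat.
Proof.
  intros Hd' Hs Hk.
  destruct (node_eq_dec (d', k') (d, k)) as [[= -> ->] | Hne].
  - rewrite bump_other by (intros [=]; lia).
    exact (inv_unvisited_children _ _ _ Hinv d k k'' Hdepth Hleaf Hk).
  - rewrite Hspl_other in Hs by exact Hne.
    destruct (node_eq_dec (S d', k'') (d, k)) as [[= <- <-] | Hne'].
    + exfalso. destruct Hparent as [Hd | Hp]; [lia |].
      replace (S d' - 1)%nat with d' in Hp by lia. congruence.
    + rewrite bump_other by exact Hne'.
      exact (inv_unvisited_children _ _ _ Hinv d' k' k'' Hd' Hs Hk).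
Qed.

Lemma leaf_update_phase d' k' : spl st' d' k' = false ->
  phase_ok (qmin st' d' k') (qmax st' d' k') (width st' d' k') (bump cnt (d, k) d' k').
Proof.
  intros Hs.
  destruct (node_cases d k d' k') as [[= -> ->] | [[-> Hk] | [Hne Hnc]]].
  - rewrite bump_same. exact (Hleaf_phase Hs).
  - rewrite bump_other by (intros [=]; lia).
    rewrite Hspl_other in Hs by (intros [=]; lia).
    destruct (spl st' d k) eqn:Hsplit.
    + destruct (Hchildren eq_refl k' Hk) as (_ & -> & ->). cbn.
      exact (inv_unvisited_children _ _ _ Hinv d k k' Hdepth Hleaf Hk).
    + apply agree_phase_ok; [apply Hagree; [intros [=]; lia | auto] |].
      exact (inv_phase _ _ _ Hinv _ _ Hs).
  - rewrite bump_other by exact Hne. rewrite Hspl_other in Hs by exact Hne.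
    apply agree_phase_ok; [apply Hagree; auto |].
    exact (inv_phase _ _ _ Hinv _ _ Hs).
Qed.

Lemma leaf_update_budget d' k' : INR (bump cnt (d, k) d' k') <= budget.
Proof.
  destruct (node_eq_dec (d', k') (d, k)) as [[= -> ->] | Hne].
  - rewrite bump_same. exact (phase_ok_budget _ _ _ _ (inv_phase _ _ _ Hinv _ _ Hleaf)).
  - rewrite bump_other by exact Hne. apply Hinv.
Qed.

Lemma leaf_update_inv : Inv st' (S t) (bump cnt (d, k)).
Proof.
  constructor.
  - exact leaf_update_range.
  - exact leaf_update_split_depth.
  - exact leaf_update_unvisited_children.
  - exact leaf_update_phase.
  - exact leaf_update_budget.
Qed.

End LeafUpdate.

Lemma len_node_pos d : 0 < len_node d.
Proof. apply Rinv_0_lt_compat, pow_lt. lra. Qed.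

Lemma shifted_down_range a b : 0 <= a <= L -> 0 <= b -> 0 <= Rmax (a - b) 0 <= L.
Proof. intros. unfold Rmax. destruct Rle_dec; lra. Qed.

Lemma shifted_up_range a b : 0 <= a <= L -> 0 <= b -> 0 <= Rmin (a + b) L <= L.
Proof. intros. unfold Rmin. destruct Rle_dec; lra. Qed.

Lemma midpoint_query_spec ya yb a (s : bool) :
  0 <= ya <= L -> 0 <= yb <= L -> 0 <= a ->
  let q := (ya + yb) / 2 in
  let ylo := if s then Rmax ya 0 else Rmax ya (q - a) in
  let yhi := if s then Rmin yb (q + a) else Rmin yb L in
  0 <= ylo <= L /\ 0 <= yhi <= L /\ yhi - ylo <= (yb - ya) / 2 + a.
Proof.
  intros Ha Hb Hpos q ylo yhi. unfold ylo, yhi, q.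
  destruct s; unfold Rmax, Rmin; repeat destruct Rle_dec; lra.
Qed.

(* The states built by the three branches of [step], up to conversion. *)
Definition checked (st : state) d k ylo yhi (dub' : bool) : state :=
  mkState (spl st) (Slo st) (Shi st) (upd (Ylo st) d k ylo) (upd (Yhi st) d k yhi)
    (upd (qmin st) d k true) (upd (qmax st) d k (qmin st d k)) (upd (dub st) d k dub').

Definition narrowed (st : state) d k ylo yhi : state :=
  mkState (spl st) (Slo st) (Shi st) (upd (Ylo st) d k ylo) (upd (Yhi st) d k yhi)
    (qmin st) (qmax st) (dub st).

Definition bisected (st : state) d k ylo yhi : state :=
  mkState (upd (spl st) d k true)
    (upd_children (Slo st) d k ylo) (upd_children (Shi st) d k yhi)
    (upd_children (upd (Ylo st) d k ylo) d k ylo) (upd_children (upd (Yhi st) d k yhi) d k yhi)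
    (upd_children (qmin st) d k false) (upd_children (qmax st) d k false)
    (upd_children (dub st) d k false).

Section LeafRound.

Variables (st : state) (t : nat) (cnt : nat -> nat -> nat) (d k : nat) (ylo yhi : R).
Hypothesis Hinv : Inv st t cnt.
Hypothesis Hdepth : (3 <= d)%nat.
Hypothesis Hparent : d = 3%nat \/ spl st (d - 1) (k / 2) = true.
Hypothesis Hleaf : spl st d k = false.
Hypothesis Hylo : 0 <= ylo <= L.
Hypothesis Hyhi : 0 <= yhi <= L.

Lemma checked_inv dub' : qmin st d k && qmax st d k = false ->
  Inv (checked st d k ylo yhi dub') (S t) (bump cnt (d, k)).
Proof.
  intros Hph.
  pose proof (inv_range _ _ _ Hinv d k) as (HSlo & HShi & _).
  pose proof (inv_phase _ _ _ Hinv d k Hleaf) as Hphase.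
  apply (leaf_update_inv st _ t cnt d k Hinv Hdepth Hparent Hleaf); cbn; auto.
  - intros d' k' Hne _. unfold agree; cbn. rewrite !upd_other by exact Hne. tauto.
  - unfold in_range; cbn. rewrite !upd_same. tauto.
  - intros _. unfold width; cbn. rewrite !upd_same.
    destruct (qmin st d k), (qmax st d k); try discriminate; cbn in Hphase |- *.
    + rewrite Hphase. exists 0%nat. rewrite pow_O. repeat split; auto; lra.
    + contradiction.
    + now rewrite Hphase.
  - rewrite Hleaf. discriminate.
Qed.

Lemma narrowed_inv a : qmin st d k = true -> qmax st d k = true ->
  yhi - ylo <= width st d k / 2 + a -> 4 * a <= yhi - ylo -> 4 * L / INR T <= yhi - ylo ->
  Inv (narrowed st d k ylo yhi) (S t) (bump cnt (d, k)).
Proof.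
  intros Hqlo Hqhi Hshrink Hwide Hfine.
  pose proof (inv_range _ _ _ Hinv d k) as (HSlo & HShi & _).
  pose proof (inv_phase _ _ _ Hinv d k Hleaf) as Hphase. rewrite Hqlo, Hqhi in Hphase.
  apply (leaf_update_inv st _ t cnt d k Hinv Hdepth Hparent Hleaf); cbn; auto.
  - intros d' k' Hne _. unfold agree; cbn. rewrite !upd_other by exact Hne. tauto.
  - unfold in_range; cbn. rewrite !upd_same. tauto.
  - intros _. unfold width; cbn. rewrite !upd_same, Hqlo, Hqhi.
    exact (phase_ok_midpoint _ _ a _ Hphase Hshrink Hwide Hfine).
  - rewrite Hleaf. discriminate.
Qed.

Lemma bisected_inv : Inv (bisected st d k ylo yhi) (S t) (bump cnt (d, k)).
Proof.
  pose proof (inv_range _ _ _ Hinv d k) as (HSlo & HShi & _).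
  apply (leaf_update_inv st _ t cnt d k Hinv Hdepth Hparent Hleaf); cbn.
  - intros d' k' Hne. exact (upd_other _ _ _ _ _ _ Hne).
  - intros d' k' Hne [Hs | Hnc]; [rewrite upd_same in Hs; discriminate |].
    unfold agree; cbn. rewrite !upd_children_other, !upd_other by auto. tauto.
  - unfold in_range; cbn. rewrite !upd_children_other, !upd_same by lia. tauto.
  - rewrite upd_same. discriminate.
  - intros _ k' Hk. unfold in_range; cbn. rewrite !upd_children_child by exact Hk. tauto.
Qed.

End LeafRound.

Lemma check_round_inv st t cnt x cr : (t < T)%nat -> Inv st t cnt ->
  let d := leaf_depth st x T 3 in let k := addr x d in
  qmin st d k && qmax st d k = false ->
  Inv (fst (fst (step L T f st x cr))) (S t) (bump cnt (d, k)).
Proof.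
  intros Ht Hinv d k Hph.
  destruct (current_leaf st t cnt x Ht Hinv) as (Hdepth & Hparent & Hleaf); fold d k in Hparent, Hleaf.
  pose proof (inv_range _ _ _ Hinv d k) as (HSlo & HShi & HYlo & HYhi).
  assert (Hlen : 0 <= L * len_node d) by (pose proof (len_node_pos d); nra).
  unfold step; fold d k. rewrite Hph. cbn [negb fst].
  apply (checked_inv st t cnt d k _ _ Hinv Hdepth Hparent Hleaf); auto;
    destruct (qmin st d k); auto;
    match goal with |- context [if ?b then _ else _] => destruct b end;
    first [lra | apply shifted_down_range | apply shifted_up_range]; lra.
Qed.

Lemma midpoint_round_inv st t cnt x cr : (t < T)%nat -> Inv st t cnt ->
  let d := leaf_depth st x T 3 in let k := addr x d in
  qmin st d k && qmax st d k = true ->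
  Inv (fst (fst (step L T f st x cr))) (S t) (bump cnt (d, k)).
Proof.
  intros Ht Hinv d k Hph.
  destruct (current_leaf st t cnt x Ht Hinv) as (Hdepth & Hparent & Hleaf); fold d k in Hparent, Hleaf.
  pose proof (inv_range _ _ _ Hinv d k) as (_ & _ & HYlo & HYhi).
  assert (Hlen : 0 <= L * len_node d) by (pose proof (len_node_pos d); nra).
  destruct (midpoint_query_spec _ _ _ (signal f x ((Ylo st d k + Yhi st d k) / 2) cr) HYlo HYhi Hlen)
    as (Hylo & Hyhi & Hshrink).
  unfold step; fold d k. rewrite Hph. cbn [negb].
  set (q := (Ylo st d k + Yhi st d k) / 2) in *.
  set (ylo := if signal f x q cr then Rmax _ 0 else Rmax _ (q - _)) in *.
  set (yhi := if signal f x q cr then Rmin _ (q + _) else Rmin _ L) in *.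
  destruct (Rlt_dec (yhi - ylo) _) as [Hsplit | Hwide]; cbn [fst].
  - exact (bisected_inv st t cnt d k ylo yhi Hinv Hdepth Hparent Hleaf Hylo Hyhi).
  - apply andb_prop in Hph as [Hqlo Hqhi].
    apply Rnot_lt_le in Hwide.
    apply (narrowed_inv st t cnt d k ylo yhi Hinv Hdepth Hparent Hleaf Hylo Hyhi (L * len_node d));
      auto; [pose proof (Rmax_l (4 * L * len_node d) (4 * L / INR T))
            | pose proof (Rmax_r (4 * L * len_node d) (4 * L / INR T))]; lra.
Qed.

Lemma step_node st x cr :
  snd (step L T f st x cr) = (leaf_depth st x T 3, addr x (leaf_depth st x T 3)).
Proof. unfold step. destruct (negb _); [| destruct (Rlt_dec _ _)]; reflexivity. Qed.

Lemma step_preserves_inv st t cnt x cr : (t < T)%nat -> Inv st t cnt ->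
  Inv (fst (fst (step L T f st x cr))) (S t) (bump cnt (snd (step L T f st x cr))).
Proof.
  intros Ht Hinv. rewrite step_node.
  set (d := leaf_depth st x T 3).
  destruct (qmin st d (addr x d) && qmax st d (addr x d)) eqn:Hph;
    [apply midpoint_round_inv | apply check_round_inv]; auto.
Qed.

Lemma step_guess_range st x cr : (forall d k, in_range L st d k) ->
  0 <= snd (fst (step L T f st x cr)) <= L.
Proof.
  intros Hrange. unfold step.
  set (d := leaf_depth st x T 3). set (k := addr x d).
  destruct (Hrange d k) as (HSlo & HShi & HYlo & HYhi).
  destruct (negb _); [destruct (qmin st d k) | destruct (Rlt_dec _ _)]; cbn; lra.
Qed.

Lemma budget_le_ln : budget <= loss_const * ln (INR T).
Proof.
  pose proof ln_three_halves_pos.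
  assert (Hln2 : 0 < ln 2) by (rewrite <- ln_1; apply ln_increasing; lra).
  assert (HlnT : ln 2 <= ln (INR T)) by (apply ln_le; [lra | apply (le_INR 2); exact HT]).
  assert (3 <= 3 / ln 2 * ln (INR T)).
  { unfold Rdiv. rewrite Rmult_assoc.
    assert (1 <= / ln 2 * ln (INR T)).
    { apply Rmult_le_reg_l with (ln 2); [lra |]. rewrite <- Rmult_assoc, Rinv_r; lra. }
    lra. }
  unfold budget, loss_const, Rdiv. lra.
Qed.

Section Run.

Variables (x : nat -> R) (c : nat -> bool).

Definition visits (t d k : nat) : nat :=
  length (filter (fun s => node_eqb (d, k) (node_of L T f x c s)) (seq 0 t)).

Lemma visits_succ t : visits (S t) = bump (visits t) (node_of L T f x c t).
Proof.
  extensionality d; extensionality k.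
  unfold visits, bump. rewrite seq_S, filter_app, length_app. cbn.
  destruct node_eqb; cbn; lia.
Qed.

Lemma run_inv t : (t <= T)%nat -> Inv (run L T f x c t) t (visits t).
Proof.
  induction t as [| t IH]; intros Ht; [exact init_inv |].
  rewrite visits_succ. apply step_preserves_inv; [lia | apply IH; lia].
Qed.

Lemma guess_range t : (t < T)%nat -> 0 <= guess L T f x c t <= L.
Proof. intros Ht. apply step_guess_range, inv_range with t (visits t), run_inv. lia. Qed.

Lemma loss_in_corrupted_le : (forall t, (t < T)%nat -> 0 <= f (x t) <= L) ->
  loss_in_corrupted L T f x c <= L * (budget * INR (length (filter c (seq 0 T)))).
Proof.
  intros Hf. unfold loss_in_corrupted.
  eapply Rle_trans; [apply sum_le_length with (b := L) |].
  - intros s Hs. apply filter_In in Hs as [Hs _]. apply in_seq in Hs.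
    pose proof (guess_range s ltac:(lia)). pose proof (Hf s ltac:(lia)).
    apply Rabs_le. lra.
  - apply Rmult_le_compat_l; [lra |].
    apply (length_filter_existsb _ _ (fun s t => node_eqb (node_of L T f x c s) (node_of L T f x c t))).
    intros s _ _. destruct (node_of L T f x c s) as [d k].
    exact (inv_budget _ _ _ (run_inv T (Nat.le_refl T)) d k).
Qed.

End Run.

End Algorithm.

Theorem lemma25 :
  exists K : R, 0 < K /\
  forall (L : R) (T C : nat) (f : R -> R) (x : nat -> R) (c : nat -> bool),
    0 < L -> (2 <= T)%nat ->
    (forall u v, 0 <= u <= 1 -> 0 <= v <= 1 -> Rabs (f u - f v) <= L * Rabs (u - v)) ->
    (forall u, 0 <= u <= 1 -> 0 <= f u <= L) ->
    (forall t, (t < T)%nat -> 0 <= x t <= 1) ->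
    (length (filter c (seq 0 T)) <= C)%nat ->
    loss_in_corrupted L T f x c <= K * L * (INR C * ln (INR T)).
Proof.
  exists loss_const. split; [exact loss_const_pos |].
  intros L T C f x c HL HT _ Hf Hx HC.
  eapply Rle_trans; [apply loss_in_corrupted_le; auto |].
  pose proof (budget_le_ln T HT). pose proof (budget_ge_3 T HT).
  assert (INR (length (filter c (seq 0 T))) <= INR C) by (apply le_INR; exact HC).
  replace (loss_const * L * (INR C * ln (INR T))) with (L * (loss_const * ln (INR T) * INR C)) by ring.
  apply Rmult_le_compat_l; [lra |].
  apply Rmult_le_compat; auto using pos_INR; lra.
Qed.
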